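(* Let $x^t$ and $\underline x_i^t$ be generated by RGEM or by stochastic RGEM (see context), and let $x\in X$. Suppose that for some $\theta_t\ge0$, $t=1,\dots,k$, \[ \theta_t\big(m(1+\tau_t)-1\big)=\theta_{t-1}m(1+\tau_{t-1}),\qquad t=2,\dots,k. \] Then \[ \sum_{t=1}^k\theta_t\mathbb{E}[Q(x^t,x)]\le\theta_k(1+\tau_k)\sum_{i=1}^m\mathbb{E}[f_i(\underline x_i^k)]+\sum_{t=1}^k\theta_t\mathbb{E}[\mu w(x^t)-\psi(x)]-\theta_1\big(m(1+\tau_1)-1\big)\big[\langle x^0-x,\nabla f(x)\rangle+f(x)\big], \] where $Q(\underline x,x):=\langle\nabla f(x),\underline x-x\rangle+\mu w(\underline x)-\mu w(x)$ and the expectation is over all random variables of the algorithm.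
   Context: $X\subseteq\mathbb{R}^n$ closed convex; $f_i:X\to\mathbb{R}$ convex and differentiable, $i=1,\dots,m$; $f=\frac1m\sum_i f_i$; $\mu\ge0$; $w:X\to\mathbb{R}$ strongly convex with modulus 1; $\psi=f+\mu w$. In the stochastic case $f_i(x)=\mathbb{E}[F_i(x,\xi_i)]$ and an oracle returns $G_i(x,\xi)$ with $\mathbb{E}[G_i(x,\xi)]=\nabla f_i(x)$. Prox-function $P(x^0,x):=w(x)-[w(x^0)+\langle w'(x^0),x-x^0\rangle]$, prox-mapping $\mathcal M_X(g,x^0,\eta):=\operatorname{argmin}_{x\in X}\{\langle g,x\rangle+\mu w(x)+\eta P(x^0,x)\}$. RGEM: given $x^0\in X$ and nonnegative $\{\alpha_t\},\{\eta_t\},\{\tau_t\}$, set $\underline x_i^0=x^0$, $y^{-1}=y^0=\mathbf 0\in(\mathbb{R}^n)^m$. For $t=1,\dots,k$: choose $i_t$ uniformly from $\{1,\dots,m\}$ independently; $\tilde y^t=y^{t-1}+\alpha_t(y^{t-1}-y^{t-2})$; $x^t=\mathcal M_X(\tfrac1m\sum_i\tilde y_i^t,x^{t-1},\eta_t)$; $\underline x_i^t=(1+\tau_t)^{-1}(x^t+\tau_t\underline x_i^{t-1})$ if $i=i_t$, else unchanged; $y_i^t=\nabla f_i(\underline x_i^t)$ if $i=i_t$, else $y_i^t=y_i^{t-1}$. Stochastic RGEM: same but for $i=i_t$, $y_i^t=\frac1{B_t}\sum_{j=1}^{B_t}G_i(\underline x_i^t,\xi_{i,j}^t)$ with fresh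 samples. *)

From HB Require Import structures.
From mathcomp Require Import all_boot all_order all_algebra.
From mathcomp Require Import all_classical all_reals all_analysis.

Set Implicit Arguments.
Unset Strict Implicit.
Unset Printing Implicit Defensive.
Import Order.TTheory GRing.Theory Num.Theory.
Import numFieldNormedType.Exports.
Local Open Scope ring_scope.
Local Open Scope classical_set_scope.

Section RGEM.
Variables (R : realType) (n : nat).

Definition dotv (u v : 'rV[R]_n) : R := \sum_(j < n) u ord0 j * v ord0 j.
Definition normE (u : 'rV[R]_n) : R := Num.sqrt (dotv u u).

Definition convex_on (X : set 'rV[R]_n) (f : 'rV[R]_n -> R) : Prop :=
  forall x y l, X x -> X y -> 0 <= l <= 1 ->
    f (l *: x + (1 - l) *: y) <= l * f x + (1 - l) * f y.

Definition strongly_convex1_on (X : set 'rV[R]_n) (f : 'rV[R]_n -> R) : Prop :=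
  forall x y l, X x -> X y -> 0 <= l <= 1 ->
    f (l *: x + (1 - l) *: y) <=
      l * f x + (1 - l) * f y - l * (1 - l) / 2 * normE (x - y) ^+ 2.

Definition is_gradient (f : 'rV[R]_n -> R) (g : 'rV[R]_n) (x : 'rV[R]_n) : Prop :=
  forall e : R, 0 < e -> exists2 d : R, 0 < d &
    forall h, normE h < d -> `|f (x + h) - f x - dotv g h| <= e * normE h.

Definition is_subgradient_on (X : set 'rV[R]_n) (f : 'rV[R]_n -> R)
  (g : 'rV[R]_n) (x : 'rV[R]_n) : Prop :=
  forall y, X y -> f x + dotv g (y - x) <= f y.

Definition proxfun (w : 'rV[R]_n -> R) (w' : 'rV[R]_n -> 'rV[R]_n)
  (x0 x : 'rV[R]_n) : R := w x - (w x0 + dotv (w' x0) (x - x0)).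

Definition is_prox_point (X : set 'rV[R]_n) (mu : R) (w : 'rV[R]_n -> R)
  (w' : 'rV[R]_n -> 'rV[R]_n) (g x0 : 'rV[R]_n) (eta : R) (z : 'rV[R]_n) : Prop :=
  X z /\ forall u, X u ->
    dotv g z + mu * w z + eta * proxfun w w' x0 z <=
    dotv g u + mu * w u + eta * proxfun w w' x0 u.

Variable m : nat.

(* state of RGEM after t steps: (x^t, (xl_i^t)_i, (y_i^{t-1})_i, (y_i^t)_i) *)
Definition rgem_state : Type :=
  ('rV[R]_n * ('I_m -> 'rV[R]_n) * ('I_m -> 'rV[R]_n) * ('I_m -> 'rV[R]_n))%type.

Variables (x0 : 'rV[R]_n)
  (M : 'rV[R]_n -> 'rV[R]_n -> R -> 'rV[R]_n) (* selection of the prox-mapping M_X(g, x0, eta) *)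
  (alpha eta tau : nat -> R)
  (* ygen t i z : the gradient (estimate) of f_i at z computed at iteration t *)
  (ygen : nat -> 'I_m -> 'rV[R]_n -> 'rV[R]_n).

Definition rgem_init : rgem_state := (x0, fun _ => x0, fun _ => 0, fun _ => 0).

Definition rgem_gbar (t : nat) (st : rgem_state) : 'rV[R]_n :=
  let: (_, _, yp, y) := st in
  m%:R^-1 *: \sum_(i < m) (y i + alpha t *: (y i - yp i)).

Definition rgem_step (t : nat) (it : 'I_m) (st : rgem_state) : rgem_state :=
  let: (x, xl, yp, y) := st in
  let x' := M (rgem_gbar t st) x (eta t) in
  let xl' := fun i => if i == it then (1 + tau t)^-1 *: (x' + tau t *: xl i)
                      else xl i in
  let y' := fun i => if i == it then ygen t i (xl' i) else y i in
  (x', xl', y, y').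

(* state after running on the history h = [:: i_t; ...; i_1] (latest first) *)
Fixpoint rgem_hist (h : seq 'I_m) : rgem_state :=
  match h with
  | [::] => rgem_init
  | it :: h' => rgem_step (size h').+1 it (rgem_hist h')
  end.

Definition rgem_at (s : seq 'I_m) (t : nat) : rgem_state :=
  rgem_hist (rev (take t s)).

Definition rgem_x (s : seq 'I_m) (t : nat) : 'rV[R]_n := (rgem_at s t).1.1.1.
Definition rgem_xl (s : seq 'I_m) (t : nat) : 'I_m -> 'rV[R]_n := (rgem_at s t).1.1.2.

End RGEM.

(* Expectation over i_1,...,i_k i.i.d. uniform on {1..m} and the (independent)
   sampling randomness omega ~ P. *)
Definition rgem_expect (R : realType) (d : measure_display) (Xi : measurableType d)
  (P : probability Xi R) (m k : nat) (Z : k.-tuple 'I_m -> Xi -> R) : R :=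
  (m ^ k)%:R^-1 * \sum_(s : k.-tuple 'I_m) Rintegral P setT (Z s).

From HB Require Import structures.
From mathcomp Require Import all_boot all_order all_algebra.
From mathcomp Require Import all_classical all_reals all_analysis.
From mathcomp Require Import ring lra.
Import Order.TTheory GRing.Theory Num.Theory.
Import numFieldNormedType.Exports.
Local Open Scope ring_scope.
Local Open Scope classical_set_scope.

Set Implicit Arguments.
Unset Strict Implicit.
Unset Printing Implicit Defensive.

(* Fix the oracle noise and average over the uniformly drawn indices. Since the
   index [i_t] equals [i] with probability [1/m], the averaged update of the
   lagged point [xl_i] satisfies
     m (1 + tau_t) E[xl_i^t] = E[x^t] + (m (1 + tau_t) - 1) E[xl_i^(t-1)],
   and so does its image under the affine map [v |-> <grad f_i(x), v - x> + f_i(x)].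
   Weighting by [theta_t], the hypothesis on [theta] makes the sum over [t]
   telescope to [theta_k m (1 + tau_k)] times the last term minus [theta_1
   (m (1 + tau_1) - 1)] times the initial one at [x^0]; the gradient inequality
   [f_i(x) + <grad f_i(x), xl - x> <= f_i(xl)] bounds the last term.  Averaging
   over [i] and integrating over the noise gives the claim. *)

Section InnerProduct.
Variables (R : realType) (n : nat).
Implicit Types (g u v : 'rV[R]_n) (a : R).

Lemma dotvC u v : dotv u v = dotv v u.
Proof. by apply: eq_bigr => j _; rewrite mulrC. Qed.

Lemma dotvDr g u v : dotv g (u + v) = dotv g u + dotv g v.
Proof. by rewrite /dotv -big_split; apply: eq_bigr => j _; rewrite mxE mulrDr. Qed.

Lemma dotvZr g a u : dotv g (a *: u) = a * dotv g u.
Proof. by rewrite /dotv mulr_sumr; apply: eq_bigr => j _; rewrite mxE mulrCA. Qed.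

Lemma dotvBr g u v : dotv g (u - v) = dotv g u - dotv g v.
Proof. by rewrite dotvDr -scaleN1r dotvZr mulN1r. Qed.

Lemma dotvZl g a u : dotv (a *: g) u = a * dotv g u.
Proof. by rewrite dotvC dotvZr dotvC. Qed.

Lemma dotv_sumr (I : Type) (r : seq I) g (F : I -> 'rV[R]_n) :
  dotv g (\sum_(i <- r) F i) = \sum_(i <- r) dotv g (F i).
Proof.
rewrite /dotv exchange_big /=; apply: eq_bigr => j _.
by rewrite summxE mulr_sumr.
Qed.

Lemma dotv_suml (I : Type) (r : seq I) (F : I -> 'rV[R]_n) u :
  dotv (\sum_(i <- r) F i) u = \sum_(i <- r) dotv (F i) u.
Proof. by rewrite dotvC dotv_sumr; apply: eq_bigr => i _; rewrite dotvC. Qed.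

Lemma normEZ a u : normE (a *: u) = `|a| * normE u.
Proof.
rewrite /normE dotvZr dotvZl mulrA -expr2 sqrtrM ?sqr_ge0 //.
by rewrite sqrtr_sqr.
Qed.

Lemma convex_on_segment (X : set 'rV[R]_n) f x z a :
  convex_on X f -> X x -> X z -> 0 <= a <= 1 ->
  f (x + a *: (z - x)) <= f x + a * (f z - f x).
Proof.
move=> cf Xx Xz a01; have := cf z x a Xz Xx a01.
by rewrite scalerBr scalerBl scale1r addrCA addrC -addrA [- _ + _]addrC; lra.
Qed.

Lemma gradient_ineq (X : set 'rV[R]_n) f g x z :
  convex_on X f -> is_gradient f g x -> X x -> X z ->
  f x + dotv g (z - x) <= f z.
Proof.
move=> cf gf Xx Xz; rewrite -lerBrDl; apply/ler_addgt0Pr => e e_gt0.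
set v := z - x; set N := normE v.
have N_ge0 : 0 <= N by exact: sqrtr_ge0.
set c := e / (N + 1).
have [d d_gt0 fd] := gf c ltac:(by rewrite divr_gt0 //; lra).
pose a := d / (d + 2 * (N + 1)).
have a_gt0 : 0 < a by rewrite divr_gt0 //; lra.
have a_le1 : a <= 1 by rewrite ler_pdivrMr ?mul1r //; lra.
have aN_lt : a * N < d.
  rewrite mulrAC ltr_pdivrMr; last lra.
  by rewrite ltr_pM2l //; lra.
have := fd (a *: v); rewrite normEZ (ger0_norm (ltW a_gt0)) => /(_ aN_lt).
rewrite dotvZr -/N => /ler_normlP[fd_lb _].
have := convex_on_segment (a := a) cf Xx Xz.
rewrite (ltW a_gt0) a_le1 -/v => /(_ isT) cvx.
have cN : a * (c * N) <= a * e.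
  by rewrite ler_pM2l // /c mulrAC ler_pdivrMr; [rewrite ler_pM2l //; lra | lra].
have : a * dotv g v <= a * (f z - f x + e) by rewrite mulrDr; lra.
by rewrite ler_pM2l.
Qed.

End InnerProduct.

Lemma convex_set_wmean (R : realFieldType) (V : lmodType R) (A : set V) a b t :
  convex_set A -> A a -> A b -> 0 <= t -> A ((1 + t)^-1 *: (a + t *: b)).
Proof.
move=> cA Aa Ab t_ge0.
have l_ge0 : 0 <= (1 + t)^-1 by rewrite invr_ge0; lra.
have l_le1 : (1 + t)^-1 <= 1 by rewrite invf_le1; lra.
have -> : (1 + t)^-1 *: (a + t *: b) = (1 + t)^-1 *: a + (1 - (1 + t)^-1) *: b.
  have -> : 1 - (1 + t)^-1 = (1 + t)^-1 * t by field; lra.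
  by rewrite scalerDr scalerA.
by move/set_mem: (cA a b (Itv01 l_ge0 l_le1) (mem_set Aa) (mem_set Ab)).
Qed.

Section UniformAverage.
Variables (R : realType) (m : nat).
Implicit Types (h : seq 'I_m -> R) (k t : nat).

Fixpoint avg_seq k h : R :=
  if k is k'.+1 then m%:R^-1 * \sum_(j < m) avg_seq k' (fun p => h (j :: p))
  else h [::].

Lemma eq_avg_seq k h1 h2 :
  (forall p, size p = k -> h1 p = h2 p) -> avg_seq k h1 = avg_seq k h2.
Proof.
elim: k h1 h2 => [|k IH] h1 h2 eq_h /=; first exact: eq_h.
by congr (_ * _); apply: eq_bigr => j _; apply: IH => p sp; apply: eq_h; rewrite /= sp.
Qed.

Lemma ler_avg_seq k h1 h2 :
  (forall p, size p = k -> h1 p <= h2 p) -> avg_seq k h1 <= avg_seq k h2.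
Proof.
elim: k h1 h2 => [|k IH] h1 h2 le_h /=; first exact: le_h.
rewrite ler_wpM2l ?invr_ge0 ?ler0n //; apply: ler_sum => j _.
by apply: IH => p sp; apply: le_h; rewrite /= sp.
Qed.

Lemma avg_seqD k h1 h2 :
  avg_seq k (fun p => h1 p + h2 p) = avg_seq k h1 + avg_seq k h2.
Proof.
elim: k h1 h2 => [|k IH] h1 h2 //=.
by under eq_bigr do rewrite IH; rewrite big_split mulrDr.
Qed.

Lemma avg_seqZ k a h : avg_seq k (fun p => a * h p) = a * avg_seq k h.
Proof.
elim: k h => [|k IH] h //=.
by under eq_bigr do rewrite IH; rewrite -mulr_sumr mulrCA.
Qed.

Lemma avg_seqB k h1 h2 :
  avg_seq k (fun p => h1 p - h2 p) = avg_seq k h1 - avg_seq k h2.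
Proof.
under eq_avg_seq do rewrite -mulN1r; by rewrite avg_seqD avg_seqZ mulN1r.
Qed.

Lemma avg_seq_sum k (I : Type) (r : seq I) (F : I -> seq 'I_m -> R) :
  avg_seq k (fun p => \sum_(i <- r) F i p) = \sum_(i <- r) avg_seq k (F i).
Proof.
elim: r => [|i r IH].
  by under eq_avg_seq do rewrite big_nil -[0](mul0r 0); rewrite avg_seqZ big_nil mul0r.
by under eq_avg_seq do rewrite big_cons; rewrite avg_seqD IH big_cons.
Qed.

Lemma avg_seq_rcons k h :
  avg_seq k.+1 h = avg_seq k (fun p => m%:R^-1 * \sum_(j < m) h (rcons p j)).
Proof.
elim: k h => [|k IH] h; first by [].
by congr (_ * _); apply: eq_bigr => i _; exact: (IH (fun p => h (i :: p))).
Qed.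

Hypothesis m_gt0 : (0 < m)%N.

Lemma avg_seq_cst k a : avg_seq k (fun=> a) = a.
Proof.
elim: k => [|k IH] //=; rewrite IH sumr_const card_ord -[a *+ m]mulr_natl.
by rewrite mulKf // pnatr_eq0 -lt0n.
Qed.

Lemma avg_seq_take k t h : (t <= k)%N ->
  avg_seq k (fun p => h (take t p)) = avg_seq t h.
Proof.
elim: t k h => [|t IH] k h le_tk.
  by rewrite -[RHS](avg_seq_cst k); apply: eq_avg_seq => p _; rewrite take0.
case: k le_tk => // k le_tk /=.
by congr (_ * _); apply: eq_bigr => j _; exact: IH.
Qed.

Lemma avg_seq_tuple k h :
  (m ^ k)%:R^-1 * \sum_(s : k.-tuple 'I_m) h s = avg_seq k h.
Proof.
elim: k h => [|k IH] h /=.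
  rewrite expn0 invr1 mul1r (eq_bigr (fun=> h [::])) => [|s _]; last by rewrite tuple0.
  by rewrite sumr_const card_tuple expn0.
rewrite expnS natrM invfM -mulrA; congr (_ * _).
under [RHS]eq_bigr do rewrite -IH.
rewrite -mulr_sumr; congr (_ * _); rewrite pair_big /=.
rewrite (reindex (fun p : 'I_m * k.-tuple 'I_m => [tuple of p.1 :: p.2])) //=.
exists (fun s : k.+1.-tuple 'I_m => (thead s, [tuple of behead s])).
  by move=> [j s] _; congr pair; apply: val_inj.
by move=> s _; rewrite [RHS]tuple_eta.
Qed.

End UniformAverage.

Lemma telescope_sumr_weighted (R : comPzRingType) (K : nat) (theta c a b : nat -> R) :
  (0 < K)%N ->
  (forall t, (1 <= t <= K)%N -> b t = c t * a t - (c t - 1) * a t.-1) ->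
  (forall t, (2 <= t <= K)%N -> theta t * (c t - 1) = theta t.-1 * c t.-1) ->
  \sum_(1 <= t < K.+1) theta t * b t = theta K * c K * a K - theta 1 * (c 1 - 1) * a 0.
Proof.
case: K => // K _; elim: K => [|K IH] b_rec theta_rec.
  by rewrite big_nat1 b_rec //; ring.
rewrite big_nat_recr //= IH => [|t /andP[t_ge1 t_le]|t /andP[t_ge2 t_le]]; last 2 first.
- by apply: b_rec; rewrite t_ge1 ltnW.
- by apply: theta_rec; rewrite t_ge2 ltnW.
rewrite b_rec //= [theta K.+2 * (_ - _)]mulrBr [theta K.+2 * ((_ - 1) * _)]mulrA.
by rewrite (theta_rec K.+2) //=; ring.
Qed.

Section RgemPath.
Variables (R : realType) (n m : nat) (x0 : 'rV[R]_n)
  (M : 'rV[R]_n -> 'rV[R]_n -> R -> 'rV[R]_n) (alpha eta tau : nat -> R)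
  (yg : nat -> 'I_m -> 'rV[R]_n -> 'rV[R]_n).
Implicit Types (p : seq 'I_m) (i j : 'I_m).

(* [p] lists the indices chronologically, whereas [rgem_hist] takes them latest first *)
Definition rgem_path p := rgem_hist x0 M alpha eta tau yg (rev p).
Definition rgem_path_x p := (rgem_path p).1.1.1.
Definition rgem_path_xl p := (rgem_path p).1.1.2.
Definition rgem_path_next p :=
  M (rgem_gbar alpha (size p).+1 (rgem_path p)) (rgem_path_x p) (eta (size p).+1).

Lemma rgem_path_rcons p j :
  rgem_path (rcons p j) = rgem_step M alpha eta tau yg (size p).+1 j (rgem_path p).
Proof. by rewrite /rgem_path rev_rcons /= size_rev. Qed.

Lemma rgem_path_x_rcons p j : rgem_path_x (rcons p j) = rgem_path_next p.
Proof.
by rewrite /rgem_path_next /rgem_path_x rgem_path_rcons; case: (rgem_path p) => [[[]]].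
Qed.

Lemma rgem_path_xl_rcons p j i : rgem_path_xl (rcons p j) i =
  if i == j then (1 + tau (size p).+1)^-1 *:
                   (rgem_path_next p + tau (size p).+1 *: rgem_path_xl p i)
  else rgem_path_xl p i.
Proof.
rewrite /rgem_path_next /rgem_path_xl /rgem_path_x rgem_path_rcons.
by case: (rgem_path p) => [[[]]].
Qed.

Lemma rgem_xE s t : rgem_x x0 M alpha eta tau yg s t = rgem_path_x (take t s).
Proof. by []. Qed.

Lemma rgem_xlE s t : rgem_xl x0 M alpha eta tau yg s t = rgem_path_xl (take t s).
Proof. by []. Qed.

Hypothesis tau_ge0 : forall t, 0 <= tau t.

Lemma mem_rgem_path_xl (X : set 'rV[R]_n) p i :
  convex_set X -> X x0 ->
  (forall t, (1 <= t <= size p)%N -> X (rgem_path_x (take t p))) ->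
  X (rgem_path_xl p i).
Proof.
move=> cX Xx0; elim/last_ind: p => [//|p j IH] Xx.
have Xx_p t : (1 <= t <= size p)%N -> X (rgem_path_x (take t p)).
  move=> /andP[t_ge1 t_le]; rewrite -(takel_cat [:: j] t_le) cats1.
  by apply: Xx; rewrite size_rcons t_ge1 leqW.
rewrite rgem_path_xl_rcons; case: eqP => _; last exact: IH.
apply: convex_set_wmean => //; last exact: IH.
rewrite -(rgem_path_x_rcons p j) -[rcons p j]take_size.
by apply: Xx; rewrite size_rcons leqnn.
Qed.

(* Only the term [j = i] moves [xl_i]: this is where the factor [m (1 + tau_t)] comes from. *)
Lemma sum_rgem_path_xl_rcons p i :
  (1 + tau (size p).+1) *: \sum_(j < m) rgem_path_xl (rcons p j) i =
  rgem_path_next p + (m%:R * (1 + tau (size p).+1) - 1) *: rgem_path_xl p i.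
Proof.
set c := tau (size p).+1; set xl := rgem_path_xl p i.
have c_ge0 : 0 <= c := tau_ge0 _.
have c1_neq0 : 1 + c != 0 by rewrite lt0r_neq0 //; lra.
rewrite (bigD1 i) //= rgem_path_xl_rcons eqxx -/c -/xl.
rewrite (eq_bigr (fun=> xl)) => [|j /negbTE]; last by rewrite rgem_path_xl_rcons eq_sym => ->.
rewrite sumr_const cardC1 card_ord scalerDr scalerA mulfV // scale1r -addrA.
congr (_ + _); rewrite -scaler_nat scalerA -scalerDl; congr (_ *: _).
have -> : m = m.-1.+1 by rewrite prednK // (leq_ltn_trans _ (ltn_ord i)).
by rewrite -pred_Sn mulrSr; ring.
Qed.

Hypothesis m_gt0 : (0 < m)%N.

Lemma avg_rgem_path_x_rec g x r t i :
  avg_seq t.+1 (fun p => dotv g (rgem_path_x p - x) + r) =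
    m%:R * (1 + tau t.+1) * avg_seq t.+1 (fun p => dotv g (rgem_path_xl p i - x) + r)
    - (m%:R * (1 + tau t.+1) - 1) * avg_seq t (fun p => dotv g (rgem_path_xl p i - x) + r).
Proof.
rewrite !avg_seq_rcons -!avg_seqZ -avg_seqB; apply: eq_avg_seq => p sp.
have m_neq0 : m%:R != 0 :> R by rewrite pnatr_eq0 -lt0n.
have := congr1 (dotv g) (sum_rgem_path_xl_rcons p i).
rewrite dotvZr dotv_sumr dotvDr dotvZr sp => key.
under eq_bigr do rewrite rgem_path_x_rcons.
rewrite sumr_const card_ord big_split /= sumr_const card_ord.
under eq_bigr do rewrite dotvBr.
rewrite sumrB sumr_const card_ord -[(_ + r) *+ m]mulr_natl mulKf //.
rewrite -[dotv g x *+ m]mulr_natl -[r *+ m]mulr_natl.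
rewrite [_ * (m%:R^-1 * _)]mulrA (mulrAC m%:R) mulfV // mul1r !dotvBr; lra.
Qed.

Lemma sum_avg_rgem_path_x_le k (X : set 'rV[R]_n) (f : 'rV[R]_n -> R) g x
    (theta : nat -> R) i :
  (0 < k)%N -> convex_on X f -> is_gradient f g x -> X x ->
  (forall p, size p = k -> X (rgem_path_xl p i)) -> 0 <= theta k ->
  (forall t, (2 <= t <= k)%N ->
     theta t * (m%:R * (1 + tau t) - 1) = theta t.-1 * (m%:R * (1 + tau t.-1))) ->
  \sum_(1 <= t < k.+1) theta t * avg_seq t (fun p => dotv g (rgem_path_x p - x) + f x)
  <= theta k * (m%:R * (1 + tau k)) * avg_seq k (fun p => f (rgem_path_xl p i))
     - theta 1 * (m%:R * (1 + tau 1) - 1) * (dotv g (x0 - x) + f x).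
Proof.
move=> k_gt0 cf gf Xx Xxl theta_k_ge0 theta_rec.
rewrite (telescope_sumr_weighted (c := fun t => m%:R * (1 + tau t))
  (a := fun t => avg_seq t (fun p => dotv g (rgem_path_xl p i - x) + f x))) //; last first.
  by case=> // t _; exact: avg_rgem_path_x_rec.
rewrite lerD2r; apply: ler_wpM2l.
  by rewrite !mulr_ge0 ?ler0n ?addr_ge0.
apply: ler_avg_seq => p /Xxl Xxl_p.
by have := gradient_ineq cf gf Xx Xxl_p; lra.
Qed.

Lemma sum_avg_rgem_x_le k (X : set 'rV[R]_n) (f : 'I_m -> 'rV[R]_n -> R)
    (gradf : 'I_m -> 'rV[R]_n -> 'rV[R]_n) x (theta : nat -> R) :
  (0 < k)%N -> convex_set X -> X x0 -> X x ->
  (forall i, convex_on X (f i)) -> (forall i, is_gradient (f i) (gradf i x) x) ->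
  (forall s, size s = k -> forall t, (1 <= t <= k)%N ->
     X (rgem_x x0 M alpha eta tau yg s t)) ->
  0 <= theta k ->
  (forall t, (2 <= t <= k)%N ->
     theta t * (m%:R * (1 + tau t) - 1) = theta t.-1 * m%:R * (1 + tau t.-1)) ->
  \sum_(1 <= t < k.+1) theta t * avg_seq k (fun s =>
     dotv (m%:R^-1 *: \sum_(i < m) gradf i x) (rgem_x x0 M alpha eta tau yg s t - x)
     + m%:R^-1 * \sum_(i < m) f i x)
  <= \sum_(i < m) theta k * (1 + tau k) *
       avg_seq k (fun s => f i (rgem_xl x0 M alpha eta tau yg s k i))
     - theta 1 * (m%:R * (1 + tau 1) - 1) *
       (dotv (x0 - x) (m%:R^-1 *: \sum_(i < m) gradf i x) + m%:R^-1 * \sum_(i < m) f i x).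
Proof.
move=> k_gt0 cX Xx0 Xx cf gf Xx_path theta_k_ge0 theta_rec.
set gb := m%:R^-1 *: _; set fb := m%:R^-1 * _.
have m_neq0 : m%:R != 0 :> R by rewrite pnatr_eq0 -lt0n.
set C := theta 1 * _.
have gb_fbE v : dotv gb v + fb = m%:R^-1 * \sum_(i < m) (dotv (gradf i x) v + f i x).
  by rewrite dotvZl dotv_suml big_split mulrDr.
have -> : \sum_(1 <= t < k.+1) theta t *
     avg_seq k (fun s => dotv gb (rgem_x x0 M alpha eta tau yg s t - x) + fb) =
   m%:R^-1 * \sum_(i < m) \sum_(1 <= t < k.+1) theta t *
     avg_seq t (fun p => dotv (gradf i x) (rgem_path_x p - x) + f i x).
  rewrite exchange_big mulr_sumr; apply: eq_big_nat => t /andP[_ t_le].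
  under eq_avg_seq do rewrite rgem_xE.
  rewrite (@avg_seq_take _ _ m_gt0 k t (fun p => dotv gb (rgem_path_x p - x) + fb)) //.
  by under eq_avg_seq do rewrite gb_fbE; rewrite avg_seqZ avg_seq_sum mulrCA mulr_sumr.
have -> : \sum_(i < m) theta k * (1 + tau k) *
       avg_seq k (fun s => f i (rgem_xl x0 M alpha eta tau yg s k i))
     - C * (dotv (x0 - x) gb + fb) =
   m%:R^-1 * \sum_(i < m) (theta k * (m%:R * (1 + tau k)) *
       avg_seq k (fun p => f i (rgem_path_xl p i))
     - C * (dotv (gradf i x) (x0 - x) + f i x)).
  rewrite sumrB mulrBr -[\sum_i C * _]mulr_sumr [m%:R^-1 * (C * _)]mulrCA -gb_fbE dotvC mulr_sumr.
  congr (_ - _).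
  apply: eq_bigr => i _; rewrite [m%:R^-1 * _]mulrA; congr (_ * _); first by field.
  by apply: eq_avg_seq => p sp; rewrite rgem_xlE -sp take_size.
apply: ler_wpM2l; first by rewrite invr_ge0 ler0n.
apply: ler_sum => i _; apply: sum_avg_rgem_path_x_le => //.
- move=> p sp; apply: mem_rgem_path_xl => // t t_le.
  by rewrite -rgem_xE; apply: Xx_path; rewrite -?sp.
- by move=> t t_le; rewrite mulrA; exact: theta_rec.
Qed.

End RgemPath.

Section Expectation.
Variables (R : realType) (d : measure_display) (Xi : measurableType d)
  (P : probability Xi R).
Local Notation integrableR g := (P.-integrable setT (EFin \o g)).
Implicit Types g : Xi -> R.

Lemma integrableR_cst c : integrableR (fun=> c).
Proof. exact: finite_measure_integrable_cst. Qed.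

Lemma integrableRD g1 g2 :
  integrableR g1 -> integrableR g2 -> integrableR (fun om => g1 om + g2 om).
Proof.
by move=> int1 int2; apply: eq_integrable (integrableD _ int1 int2) => // om _; rewrite /= EFinD.
Qed.

Lemma integrableRB g1 g2 :
  integrableR g1 -> integrableR g2 -> integrableR (fun om => g1 om - g2 om).
Proof.
by move=> int1 int2; apply: eq_integrable (integrableB _ int1 int2) => // om _; rewrite /= EFinB.
Qed.

Lemma Rintegral_sum (I : eqType) (r : seq I) (g : I -> Xi -> R) :
  (forall i, i \in r -> integrableR (g i)) ->
  integrableR (fun om => \sum_(i <- r) g i om) /\
  Rintegral P setT (fun om => \sum_(i <- r) g i om) =
    \sum_(i <- r) Rintegral P setT (g i).
Proof.
elim: r => [|i r IH] int_g.
  rewrite (_ : (fun om => _) = fun=> 0); last by apply: funext => om; rewrite big_nil.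
  rewrite big_nil Rintegral_cst // mul0r.
  by split=> //; exact: integrableR_cst.
have [int_r Rint_r] := IH (fun j j_r => int_g j ltac:(by rewrite inE j_r orbT)).
have int_i := int_g i (mem_head i r).
rewrite (_ : (fun om => _) = fun om => g i om + \sum_(j <- r) g j om); last first.
  by apply: funext => om; rewrite big_cons.
rewrite big_cons -Rint_r -RintegralD //.
by split=> //; exact: integrableRD.
Qed.

Lemma Rintegral_lincomb (I : eqType) (r : seq I) (a : I -> R) (g : I -> Xi -> R) :
  (forall i, i \in r -> integrableR (g i)) ->
  integrableR (fun om => \sum_(i <- r) a i * g i om) /\
  Rintegral P setT (fun om => \sum_(i <- r) a i * g i om) =
    \sum_(i <- r) a i * Rintegral P setT (g i).
Proof.
move=> int_g; have int_ag i : i \in r -> integrableR (fun om => a i * g i om).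
  move=> /int_g int_gi.
  by apply: eq_integrable (integrableZl _ (a i) int_gi) => // om _; rewrite /= EFinM.
have [int_sum ->] := Rintegral_sum int_ag; split=> //.
by apply: eq_big_seq => i /int_g int_gi; rewrite RintegralZl.
Qed.

Variables (m k : nat).
Implicit Types Z W : k.-tuple 'I_m -> Xi -> R.

Lemma rgem_expect_Rintegral Z : (forall s, integrableR (Z s)) ->
  integrableR (fun om => (m ^ k)%:R^-1 * \sum_s Z s om) /\
  rgem_expect P Z = Rintegral P setT (fun om => (m ^ k)%:R^-1 * \sum_s Z s om).
Proof.
move=> int_Z; have [int_avg Rint_avg] := Rintegral_lincomb
  (r := index_enum (k.-tuple 'I_m)) (fun=> (m ^ k)%:R^-1) (fun s _ => int_Z s).
under eq_fun do rewrite mulr_sumr; split=> //.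
by rewrite Rint_avg /rgem_expect mulr_sumr.
Qed.

Lemma rgem_expectB Z W : (forall s, integrableR (Z s)) -> (forall s, integrableR (W s)) ->
  rgem_expect P (fun s om => Z s om - W s om) = rgem_expect P Z - rgem_expect P W.
Proof.
move=> int_Z int_W; rewrite /rgem_expect -mulrBr -sumrB; congr (_ * _).
by apply: eq_bigr => s _; rewrite RintegralB.
Qed.

Lemma rgem_expect_lincomb (I : eqType) (r : seq I) (a : I -> R)
    (Z : I -> k.-tuple 'I_m -> Xi -> R) :
  (forall i, i \in r -> forall s, integrableR (Z i s)) ->
  integrableR (fun om => \sum_(i <- r) a i * ((m ^ k)%:R^-1 * \sum_s Z i s om)) /\
  \sum_(i <- r) a i * rgem_expect P (Z i) =
    Rintegral P setT (fun om => \sum_(i <- r) a i * ((m ^ k)%:R^-1 * \sum_s Z i s om)).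
Proof.
move=> int_Z; have [int_r ->] := Rintegral_lincomb a
  (fun i i_r => (rgem_expect_Rintegral (int_Z i i_r)).1).
split=> //; apply: eq_big_seq => i i_r.
by rewrite (rgem_expect_Rintegral (int_Z i i_r)).2.
Qed.

Lemma rgem_expect_le_lincomb (I J : eqType) (r : seq I) (r' : seq J)
    (a : I -> R) (b : J -> R) (Z : I -> k.-tuple 'I_m -> Xi -> R)
    (W : J -> k.-tuple 'I_m -> Xi -> R) (c : R) :
  (forall i, i \in r -> forall s, integrableR (Z i s)) ->
  (forall j, j \in r' -> forall s, integrableR (W j s)) ->
  (forall om, \sum_(i <- r) a i * ((m ^ k)%:R^-1 * \sum_s Z i s om) <=
              \sum_(j <- r') b j * ((m ^ k)%:R^-1 * \sum_s W j s om) + c) ->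
  \sum_(i <- r) a i * rgem_expect P (Z i) <= \sum_(j <- r') b j * rgem_expect P (W j) + c.
Proof.
move=> int_Z int_W le_avg.
have [int_lhs ->] := rgem_expect_lincomb a int_Z.
have [int_rhs ->] := rgem_expect_lincomb b int_W.
have Rint_c : Rintegral P setT (fun=> c) = c.
  rewrite Rintegral_cst // (_ : fine _ = 1) ?mulr1 //.
  exact: (congr1 fine (probability_setT P)).
rewrite -[c in X in _ <= X]Rint_c -RintegralD //; last exact: integrableR_cst.
by apply: le_Rintegral => //; apply: integrableRD => //; exact: integrableR_cst.
Qed.

End Expectation.

Unset Implicit Arguments.
Set Strict Implicit.

Theorem lemma4p2
  (R : realType) (n m k : nat)
  (X : set 'rV[R]_n) (f : 'I_m -> 'rV[R]_n -> R) (gradf : 'I_m -> 'rV[R]_n -> 'rV[R]_n)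
  (mu : R) (w : 'rV[R]_n -> R) (w' : 'rV[R]_n -> 'rV[R]_n)
  (M : 'rV[R]_n -> 'rV[R]_n -> R -> 'rV[R]_n)
  (x0 : 'rV[R]_n) (alpha eta tau theta : nat -> R)
  (* randomness of the stochastic oracle *)
  (d : measure_display) (Xi : measurableType d) (P : probability Xi R)
  (S : Type) (G : 'I_m -> 'rV[R]_n -> S -> 'rV[R]_n) (xi : Xi -> nat -> 'I_m -> nat -> S)
  (B : nat -> nat)
  (ygen : Xi -> nat -> 'I_m -> 'rV[R]_n -> 'rV[R]_n)
  (x : 'rV[R]_n) :
  (0 < m)%N -> (1 <= k)%N ->
  closed X -> convex_set X ->
  (forall i, convex_on X (f i)) ->
  (forall i z, X z -> is_gradient (f i) (gradf i z) z) ->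
  0 <= mu -> strongly_convex1_on X w ->
  (forall z, X z -> is_subgradient_on X w (w' z) z) ->
  X x0 ->
  (forall t, 0 <= alpha t) -> (forall t, 0 <= eta t) -> (forall t, 0 <= tau t) ->
  (* RGEM (exact gradients) or stochastic RGEM (mini-batch of oracle calls) *)
  ((forall om t i z, ygen om t i z = gradf i z) \/
   ((forall t, (0 < B t)%N) /\
    forall om t i z, ygen om t i z =
      (B t)%:R^-1 *: \sum_(j < B t) G i z (xi om t i j))) ->
  (* x^t is a point of the prox-mapping M_X(gbar^t, x^{t-1}, eta_t) *)
  (forall (s : k.-tuple 'I_m) om t, (1 <= t <= k)%N ->
     is_prox_point X mu w w'
       (rgem_gbar alpha t (rgem_at x0 M alpha eta tau (ygen om) s t.-1))
       (rgem_x x0 M alpha eta tau (ygen om) s t.-1) (eta t)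
       (rgem_x x0 M alpha eta tau (ygen om) s t)) ->
  (* the expectations below exist *)
  (forall (s : k.-tuple 'I_m) t, (1 <= t <= k)%N ->
     P.-integrable setT (fun om =>
       (dotv (m%:R^-1 *: \sum_(i < m) gradf i x)
          (rgem_x x0 M alpha eta tau (ygen om) s t - x)
        + mu * w (rgem_x x0 M alpha eta tau (ygen om) s t) - mu * w x)%:E)) ->
  (forall (s : k.-tuple 'I_m) t, (1 <= t <= k)%N ->
     P.-integrable setT (fun om =>
       (mu * w (rgem_x x0 M alpha eta tau (ygen om) s t))%:E)) ->
  (forall (s : k.-tuple 'I_m) i,
     P.-integrable setT (fun om =>
       (f i (rgem_xl x0 M alpha eta tau (ygen om) s k i))%:E)) ->
  X x ->
  (forall t, (1 <= t <= k)%N -> 0 <= theta t) ->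
  (forall t, (2 <= t <= k)%N ->
     theta t * (m%:R * (1 + tau t) - 1) = theta t.-1 * m%:R * (1 + tau t.-1)) ->
  let fbar := fun z => m%:R^-1 * \sum_(i < m) f i z in
  let gradfbar := fun z => m%:R^-1 *: \sum_(i < m) gradf i z in
  let psi := fun z => fbar z + mu * w z in
  let Q := fun xl z => dotv (gradfbar z) (xl - z) + mu * w xl - mu * w z in
  let E := rgem_expect P (k := k) in
  \sum_(1 <= t < k.+1)
     theta t * E (fun s om => Q (rgem_x x0 M alpha eta tau (ygen om) s t) x)
  <= theta k * (1 + tau k) *
       \sum_(i < m) E (fun s om => f i (rgem_xl x0 M alpha eta tau (ygen om) s k i))
     + \sum_(1 <= t < k.+1)
         theta t * E (fun s om => mu * w (rgem_x x0 M alpha eta tau (ygen om) s t) - psi x)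
     - theta 1 * (m%:R * (1 + tau 1) - 1) * (dotv (x0 - x) (gradfbar x) + fbar x).
Proof.
move=> m_gt0 k_gt0 _ cX cf gf _ _ _ Xx0 _ _ tau_ge0 _ x_prox Q_int w_int f_int Xx
  theta_ge0 theta_rec; cbv zeta.
set gb := m%:R^-1 *: \sum_(i < m) gradf i x; set fb := m%:R^-1 * \sum_(i < m) f i x.
pose xt om (s : seq 'I_m) t := rgem_x x0 M alpha eta tau (ygen om) s t.
have U_int (s : k.-tuple 'I_m) t : (1 <= t <= k)%N ->
    P.-integrable setT (fun om => (mu * w (xt om s t) - (fb + mu * w x))%:E).
  by move=> t_in; apply: integrableRB (w_int s t t_in) (integrableR_cst _ _).
(* Moving the [w]-terms to the left leaves [<grad f(x), x^t - x> + f(x)], affine in [x^t]. *)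
rewrite addrAC -lerBlDr -sumrB.
under eq_big_nat => t t_in do
  rewrite -mulrBr -(rgem_expectB (fun s => Q_int s t t_in) (fun s => U_int s t t_in)).
rewrite mulr_sumr; apply: rgem_expect_le_lincomb => [t t_in s|i _ s|om].
- by rewrite mem_index_iota in t_in; apply: integrableRB; [exact: Q_int | exact: U_int].
- exact: f_int.
have QU_E s t : dotv gb (xt om s t - x) + mu * w (xt om s t) - mu * w x
    - (mu * w (xt om s t) - (fb + mu * w x)) = dotv gb (xt om s t - x) + fb by ring.
under eq_big_nat => t _ do under eq_bigr => s _ do rewrite QU_E.
under eq_big_nat => t _ do
  rewrite (avg_seq_tuple k (fun s => dotv gb (xt om s t - x) + fb)).
under [\sum_(i < m) _]eq_bigr => i _ do
  rewrite (avg_seq_tuple k (fun s => f i (rgem_xl x0 M alpha eta tau (ygen om) s k i))).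
apply: (sum_avg_rgem_x_le tau_ge0 m_gt0 (X := X)) => //.
- by move=> i; exact: gf.
- by move=> s sk t t_in; exact: (x_prox (Tuple (introT eqP sk)) om t t_in).1.
- by apply: theta_ge0; rewrite k_gt0 leqnn.
Qed.
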